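(* For all real numbers $a,b,c>0$, \[ \frac{2a}{\sqrt{2a^2+b^2+c^2}}+\frac{2b}{\sqrt{2b^2+c^2+a^2}}+\frac{2c}{\sqrt{2c^2+a^2+b^2}}\leq \frac{3\sqrt{2}\,(a+b+c)}{\sqrt{5a^2+5b^2+5c^2+ab+bc+ca}}. \] *)

From Stdlib Require Import Reals Lra.

(* Each term is bounded by the tangent estimate 2a/s <= a (s^2 + t^2) / (s^2 t),
   i.e. AM-GM 2st <= s^2 + t^2, taken at the common value t = sqrt(2D)/3 where
   every radical s equals t in the equality case a = b = c.  This removes all
   square roots, and the remaining rational inequality is, after clearing
   denominators, a symmetric polynomial inequality.  For a >= b >= c >= 0 the
   substitution a = c + x + y, b = c + x turns the polynomial into one with
   nonnegative coefficients. *)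
From Stdlib Require Import Reals Lra.
Open Scope R_scope.

Definition lhs_quad (a b c : R) : R := 2 * a ^ 2 + b ^ 2 + c ^ 2.

Definition rhs_quad (a b c : R) : R :=
  5 * a ^ 2 + 5 * b ^ 2 + 5 * c ^ 2 + a * b + b * c + c * a.

(* Numerator of [(a + b + c) - 2 D / 9 * (a / Xa + b / Xb + c / Xc)] over the
   denominator [Xa Xb Xc / 9]. *)
Definition clearing_gap (a b c : R) : R :=
  let Xa := lhs_quad a b c in let Xb := lhs_quad b c a in
  let Xc := lhs_quad c a b in
  9 * (a + b + c) * (Xa * Xb * Xc)
  - 2 * rhs_quad a b c * (a * Xb * Xc + b * Xa * Xc + c * Xa * Xb).

Lemma lhs_quad_gt0 a b c : 0 < a -> 0 < lhs_quad a b c.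
Proof. intros; unfold lhs_quad; nra. Qed.

Lemma rhs_quad_gt0 a b c : 0 < a -> 0 < b -> 0 < c -> 0 < rhs_quad a b c.
Proof. intros; unfold rhs_quad; nra. Qed.

Lemma clearing_gap_swap12 a b c : clearing_gap a b c = clearing_gap b a c.
Proof. unfold clearing_gap, lhs_quad, rhs_quad; ring. Qed.

Lemma clearing_gap_swap23 a b c : clearing_gap a b c = clearing_gap a c b.
Proof. unfold clearing_gap, lhs_quad, rhs_quad; ring. Qed.

Lemma clearing_gap_sorted_ge0 a b c :
  0 <= c -> c <= b -> b <= a -> 0 <= clearing_gap a b c.
Proof.
  intros Hc Hcb Hba.
  set (x := b - c); set (y := a - b).
  assert (Hx : 0 <= x) by (unfold x; lra).
  assert (Hy : 0 <= y) by (unfold y; lra).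
  replace (clearing_gap a b c) with
    (  8 * y ^ 7 + 52 * x * y ^ 6 + 163 * x ^ 2 * y ^ 5 + 322 * x ^ 3 * y ^ 4
     + 425 * x ^ 4 * y ^ 3 + 380 * x ^ 5 * y ^ 2 + 210 * x ^ 6 * y + 60 * x ^ 7
     + c * (48 * y ^ 6 + 292 * x * y ^ 5 + 839 * x ^ 2 * y ^ 4 + 1430 * x ^ 3 * y ^ 3
            + 1555 * x ^ 4 * y ^ 2 + 1008 * x ^ 5 * y + 336 * x ^ 6)
     + c ^ 2 * (148 * y ^ 5 + 790 * x * y ^ 4 + 1876 * x ^ 2 * y ^ 3
                + 2564 * x ^ 3 * y ^ 2 + 1970 * x ^ 4 * y + 788 * x ^ 5)
     + c ^ 3 * (280 * y ^ 4 + 1168 * x * y ^ 3 + 2152 * x ^ 2 * y ^ 2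
                + 1968 * x ^ 3 * y + 984 * x ^ 4)
     + c ^ 4 * (304 * y ^ 3 + 936 * x * y ^ 2 + 984 * x ^ 2 * y + 656 * x ^ 3)
     + c ^ 5 * (192 * y ^ 2 + 192 * x * y + 192 * x ^ 2))
    by (unfold clearing_gap, lhs_quad, rhs_quad, x, y; ring).
  clearbody x y.
  repeat first [ apply Rplus_le_le_0_compat | apply Rmult_le_pos
               | apply pow_le | lra ].
Qed.

Lemma clearing_gap_ge0 a b c : 0 <= a -> 0 <= b -> 0 <= c -> 0 <= clearing_gap a b c.
Proof.
  intros Ha Hb Hc.
  destruct (Rle_or_lt b a), (Rle_or_lt c b), (Rle_or_lt c a);
  first [ apply clearing_gap_sorted_ge0; lra
        | rewrite clearing_gap_swap23; apply clearing_gap_sorted_ge0; lra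
        | rewrite clearing_gap_swap12; apply clearing_gap_sorted_ge0; lra
        | rewrite clearing_gap_swap12, clearing_gap_swap23;
          apply clearing_gap_sorted_ge0; lra
        | rewrite clearing_gap_swap23, clearing_gap_swap12;
          apply clearing_gap_sorted_ge0; lra
        | rewrite clearing_gap_swap12, clearing_gap_swap23, clearing_gap_swap12;
          apply clearing_gap_sorted_ge0; lra ].
Qed.

Lemma double_div_le_tangent a s t : 0 < a -> 0 < s -> 0 < t ->
  2 * a / s <= a * (s ^ 2 + t ^ 2) / (s ^ 2 * t).
Proof.
  intros Ha Hs Ht.
  assert (E : a * (s ^ 2 + t ^ 2) / (s ^ 2 * t) - 2 * a / s
              = a * (s - t) ^ 2 / (s ^ 2 * t)) by (field; lra).
  assert (0 <= a * (s - t) ^ 2 / (s ^ 2 * t)).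
  { apply Rmult_le_pos.
    - apply Rmult_le_pos; [lra | apply pow2_ge_0].
    - left; apply Rinv_0_lt_compat, Rmult_lt_0_compat; [apply pow_lt|]; lra. }
  lra.
Qed.

Lemma double_div_sqrt_le_tangent a X t : 0 < a -> 0 < X -> 0 < t ->
  2 * a / sqrt X <= a * (X + t ^ 2) / (X * t).
Proof.
  intros Ha HX Ht.
  rewrite <- (pow2_sqrt X) at 2 3 by lra.
  apply double_div_le_tangent; auto using sqrt_lt_R0.
Qed.

Lemma tangent_sum_le a b c t : 0 < a -> 0 < b -> 0 < c -> 0 < t ->
  t ^ 2 = 2 * rhs_quad a b c / 9 ->
  a * (lhs_quad a b c + t ^ 2) / (lhs_quad a b c * t)
  + b * (lhs_quad b c a + t ^ 2) / (lhs_quad b c a * t)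
  + c * (lhs_quad c a b + t ^ 2) / (lhs_quad c a b * t) <= 2 * (a + b + c) / t.
Proof.
  intros Ha Hb Hc Ht Et.
  pose proof (lhs_quad_gt0 a b c Ha); pose proof (lhs_quad_gt0 b c a Hb).
  pose proof (lhs_quad_gt0 c a b Hc).
  assert (HP := clearing_gap_ge0 a b c ltac:(lra) ltac:(lra) ltac:(lra)).
  assert (E : 2 * (a + b + c) / t
              - (a * (lhs_quad a b c + t ^ 2) / (lhs_quad a b c * t)
                 + b * (lhs_quad b c a + t ^ 2) / (lhs_quad b c a * t)
                 + c * (lhs_quad c a b + t ^ 2) / (lhs_quad c a b * t))
              = clearing_gap a b c
                / (9 * lhs_quad a b c * lhs_quad b c a * lhs_quad c a b * t)).
  { rewrite Et; unfold clearing_gap; field; repeat split; lra. }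
  assert (0 <= clearing_gap a b c
               / (9 * lhs_quad a b c * lhs_quad b c a * lhs_quad c a b * t)).
  { apply Rmult_le_pos; [lra|].
    left; apply Rinv_0_lt_compat; repeat apply Rmult_lt_0_compat; lra. }
  lra.
Qed.

Lemma double_div_third_sqrt s D : 0 < D ->
  2 * s / (sqrt (2 * D) / 3) = 3 * sqrt 2 * s / sqrt D.
Proof.
  intros HD.
  assert (H2 : 0 < sqrt 2) by (apply sqrt_lt_R0; lra).
  assert (HsD : 0 < sqrt D) by (apply sqrt_lt_R0; lra).
  rewrite sqrt_mult by lra.
  replace (3 * sqrt 2 * s) with (3 * (sqrt 2 * sqrt 2) * s / sqrt 2) by (field; lra).
  rewrite sqrt_sqrt by lra.
  field; lra.
Qed.

Theorem mainTheorem4 (a b c : R) (ha : 0 < a) (hb : 0 < b) (hc : 0 < c) :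
  2 * a / sqrt (2 * a ^ 2 + b ^ 2 + c ^ 2)
  + 2 * b / sqrt (2 * b ^ 2 + c ^ 2 + a ^ 2)
  + 2 * c / sqrt (2 * c ^ 2 + a ^ 2 + b ^ 2)
  <= 3 * sqrt 2 * (a + b + c)
     / sqrt (5 * a ^ 2 + 5 * b ^ 2 + 5 * c ^ 2 + a * b + b * c + c * a).
Proof.
  change (2 * a / sqrt (lhs_quad a b c) + 2 * b / sqrt (lhs_quad b c a)
          + 2 * c / sqrt (lhs_quad c a b)
          <= 3 * sqrt 2 * (a + b + c) / sqrt (rhs_quad a b c)).
  pose proof (rhs_quad_gt0 a b c ha hb hc) as HD.
  set (t := sqrt (2 * rhs_quad a b c) / 3).
  assert (Ht : 0 < t) by (unfold t; pose proof (sqrt_lt_R0 (2 * rhs_quad a b c)); lra).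
  assert (Et : t ^ 2 = 2 * rhs_quad a b c / 9).
  { unfold t; replace ((sqrt (2 * rhs_quad a b c) / 3) ^ 2)
      with (sqrt (2 * rhs_quad a b c) ^ 2 / 9) by field.
    rewrite pow2_sqrt; lra. }
  rewrite <- double_div_third_sqrt by exact HD; fold t.
  pose proof (double_div_sqrt_le_tangent a _ t ha (lhs_quad_gt0 a b c ha) Ht).
  pose proof (double_div_sqrt_le_tangent b _ t hb (lhs_quad_gt0 b c a hb) Ht).
  pose proof (double_div_sqrt_le_tangent c _ t hc (lhs_quad_gt0 c a b hc) Ht).
  pose proof (tangent_sum_le a b c t ha hb hc Ht Et).
  lra.
Qed.
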